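(* Let $0\le r,s\le n$ and $\mathbf c_1,\mathbf c_2,\mathbf c_1',\mathbf c_2'\in\mathrm{GF}(q^m)^n$ with $d_{\mathrm R}(\mathbf c_1,\mathbf c_2)>d_{\mathrm R}(\mathbf c_1',\mathbf c_2')$. Then $$|B_r(\mathbf c_1)\cap B_s(\mathbf c_2)|\le |B_r(\mathbf c_1')\cap B_s(\mathbf c_2')|.$$
   Context: The rank $\mathrm{rk}(\mathbf x)$ of $\mathbf x\in\mathrm{GF}(q^m)^n$ is the maximum number of its coordinates linearly independent over $\mathrm{GF}(q)$, and $d_{\mathrm R}(\mathbf x,\mathbf y)=\mathrm{rk}(\mathbf x-\mathbf y)$. $B_r(\mathbf x)=\{\mathbf y\in\mathrm{GF}(q^m)^n: d_{\mathrm R}(\mathbf x,\mathbf y)\le r\}$ is the ball of rank radius $r$ centered at $\mathbf x$. *)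

From HB Require Import structures.
From mathcomp Require Import all_boot all_order all_algebra all_field.
Set Implicit Arguments. Unset Strict Implicit. Unset Printing Implicit Defensive.
Import GRing.Theory.
Local Open Scope ring_scope.

(* Setting: F = GF(q) a finite field, L = GF(q^m) a finite-dimensional field
   extension of F (so L is finite of order q^m, m = \dim_F L).
   Vectors of GF(q^m)^n are row vectors 'rV[L]_n; to count elements we use
   the finite-type view finvect_type L of L. *)

Section RankMetric.
Variables (F : finFieldType) (L : fieldExtType F) (n : nat).

Notation FL := (finvect_type L).

Definition rk (x : 'rV[FL]_n) : nat :=
  \dim (<<[seq (x ord0 i : L) | i <- enum 'I_n]>>%VS : {vspace L}).

Definition dR (x y : 'rV[FL]_n) : nat := rk (x - y).

Definition ballR (r : nat) (x : 'rV[FL]_n) : {set 'rV[FL]_n} :=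
  [set y | dR x y <= r]%N.

End RankMetric.

From HB Require Import structures.
From mathcomp Require Import all_boot all_order all_algebra all_field.
Set Implicit Arguments. Unset Strict Implicit. Unset Printing Implicit Defensive.
Import GRing.Theory.
Local Open Scope ring_scope.

(* Writing the entries of a vector of GF(q^m)^n in a GF(q)-basis of GF(q^m)
   turns it into an n x m matrix over GF(q) whose rank is its rank weight.
   The intersection of balls then has the size of the set of splittings
   X = Y + (X - Y) with rank Y <= r and rank (X - Y) <= s, where X is the
   matrix of c1 - c2.  This count is invariant under X |-> P X Q for
   invertible P, Q, so it depends only on rank X, and it does not decrease
   when one row of X is zeroed.  For the latter, subtract from row j of every
   splitting Y a fixed row t, chosen from the other rows of Y only; this is
   injective and lands in the splittings of the new matrix, because if two
   matrices differing only in row j have rank <= k, then so does the one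
   whose row j is the difference of theirs. *)

Section MatrixRank.
Variables (F : fieldType) (p q : nat).
Implicit Types (A B : 'M[F]_(p, q)) (t u : 'rV[F]_q) (j : 'I_p).

Definition row_set j A t : 'M[F]_(p, q) :=
  \matrix_(i, l) if i == j then t 0 l else A i l.

Lemma row_row_set j A t : row j (row_set j A t) = t.
Proof. by apply/rowP => l; rewrite !mxE eqxx. Qed.

Lemma row_row_set_neq j A t i : i != j -> row i (row_set j A t) = row i A.
Proof. by move=> ij; apply/rowP => l; rewrite !mxE (negPf ij). Qed.

Lemma row_set_set j A t u : row_set j (row_set j A t) u = row_set j A u.
Proof. by apply/matrixP => i l; rewrite !mxE; case: eqP. Qed.

Lemma row_setK j A : row_set j A (row j A) = A.
Proof. by apply/matrixP => i l; rewrite !mxE; case: eqP => // ->. Qed.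

Lemma row_setB j A B t u : row_set j A t - row_set j B u = row_set j (A - B) (t - u).
Proof. by apply/matrixP => i l; rewrite !mxE; case: eqP. Qed.

Lemma row_set_eqmx j A t : (row_set j A t :=: row_set j A 0 + t)%MS.
Proof.
have other_rows i : i != j -> (row i (row_set j A t) :=: row i (row_set j A 0))%MS.
  by move=> ij; rewrite !row_row_set_neq.
apply/eqmxP/andP; split.
  apply/row_subP => i; have [->|ij] := eqVneq i j.
    by rewrite row_row_set addsmxSr.
  by rewrite (other_rows i ij) (submx_trans (row_sub _ _) (addsmxSl _ _)).
rewrite addsmx_sub -{2}(row_row_set j A t) row_sub andbT.
apply/row_subP => i; have [->|ij] := eqVneq i j; first by rewrite row_row_set sub0mx.
by rewrite -(other_rows i ij) row_sub.
Qed.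

(* If B + t and B + u both have rank at most k, then either B already has
   rank < k, or t and u both lie in the row space of B. *)
Lemma mxrank_adds_rowB m (B : 'M[F]_(m, q)) t u k :
  (\rank (B + t)%MS <= k)%N -> (\rank (B + u)%MS <= k)%N ->
  (\rank (B + (t - u)%R)%MS <= k)%N.
Proof.
have rank_adds_row (v : 'rV_q) : (\rank (B + v)%MS <= (\rank B).+1)%N.
  apply: leq_trans (mxrank_adds_leqif B v) _.
  by rewrite -[(\rank B).+1]addn1 leq_add2l rank_leq_row.
have [ltBk _ _|geBk Btk Buk] := ltnP (\rank B) k.
  exact: leq_trans (rank_adds_row _) ltBk.
have row_sub_of_rank (v : 'rV_q) : (\rank (B + v)%MS <= k)%N -> (v <= B)%MS.
  move=> Bvk; have /mxrank_leqif_sup[_] := addsmxSl B v.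
  rewrite eqn_leq (leq_trans Bvk geBk) mxrankS ?addsmxSl // => /esym/idP.
  exact: submx_trans (addsmxSr B v).
rewrite (addsmx_idPl _); last by rewrite addmx_sub ?eqmx_opp ?row_sub_of_rank.
by apply: leq_trans Btk; rewrite mxrankS ?addsmxSl.
Qed.

Lemma mxrank_row_setB j A t u k :
  (\rank (row_set j A t) <= k)%N -> (\rank (row_set j A u) <= k)%N ->
  (\rank (row_set j A (t - u)) <= k)%N.
Proof. rewrite !(row_set_eqmx j A); exact: mxrank_adds_rowB. Qed.

Lemma row_set_pid_mx d (lt_dp : (d < p)%N) :
  row_set (Ordinal lt_dp) (pid_mx d.+1) 0 = pid_mx d :> 'M[F]_(p, q).
Proof.
apply/matrixP => i l; rewrite !mxE; have [->|] := eqVneq i (Ordinal lt_dp).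
  by rewrite ltnn andbF.
by rewrite -val_eqE /= ltnS leq_eqVlt => /negPf->.
Qed.

Lemma mxrank_mul_unit m n (P : 'M[F]_m) (Q : 'M[F]_n) (Y : 'M[F]_(m, n)) :
  P \in unitmx -> Q \in unitmx -> \rank (P *m Y *m Q) = \rank Y.
Proof. by move=> uP uQ; rewrite mxrankMfree ?row_free_unit // eqmxMfull ?row_full_unit. Qed.

End MatrixRank.

Section RankSplits.
Variables (F : finFieldType) (p q r s : nat).
Implicit Types (X Y : 'M[F]_(p, q)).

Definition rank_splits X : {set 'M[F]_(p, q)} :=
  [set Y | (\rank Y <= r)%N && (\rank (X - Y)%R <= s)%N].

Lemma card_rank_splits_row0 j X :
  (#|rank_splits X| <= #|rank_splits (row_set j X 0)|)%N.
Proof.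
pose pick_row Z := odflt 0 [pick t | row_set j Z t \in rank_splits X].
pose shift Y := row_set j Y (row j Y - pick_row (row_set j Y 0)).
have shift_inj : injective shift.
  move=> Y1 Y2 eq12.
  have eq0 : row_set j Y1 0 = row_set j Y2 0.
    by have := congr1 (row_set j ^~ 0) eq12; rewrite !row_set_set.
  have /(congr1 (row j)) := eq12; rewrite !row_row_set eq0 => /addIr eqj.
  by rewrite -(row_setK j Y1) -(row_set_set j Y1 0) eq0 eqj row_set_set row_setK.
rewrite -(card_imset _ shift_inj) subset_leq_card //.
apply/subsetP => _ /imsetP[Y YX ->]; set Z := row_set j Y 0; set u := row j Y.
have ZuX : row_set j Z u \in rank_splits X by rewrite row_set_set row_setK.
rewrite /shift -/Z -/u /pick_row; case: pickP => [t|/(_ u)]; last by rewrite ZuX.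
move: ZuX; rewrite !inE => /andP[rkZu rkXZu] /andP[rkZt rkXZt].
have -> : row_set j Y (u - t) = row_set j Z (u - t) by rewrite row_set_set.
rewrite mxrank_row_setB //=.
have -> : row_set j X 0 - row_set j Z (u - t) =
          row_set j (X - Z) ((row j X - u) - (row j X - t)).
  by rewrite row_setB; congr (row_set j _ _); rewrite sub0r [RHS]addrC !opprB addrA subrK.
by apply: mxrank_row_setB; rewrite -row_setB row_setK.
Qed.

Lemma card_rank_splits_mul (P : 'M[F]_p) (Q : 'M[F]_q) X :
  P \in unitmx -> Q \in unitmx -> #|rank_splits (P *m X *m Q)| = #|rank_splits X|.
Proof.
suff le_card P' Q' X' : P' \in unitmx -> Q' \in unitmx ->
    (#|rank_splits X'| <= #|rank_splits (P' *m X' *m Q')|)%N.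
  move=> uP uQ; apply/eqP; rewrite eqn_leq le_card // andbT.
  have {2}-> : X = invmx P *m (P *m X *m Q) *m invmx Q.
    by rewrite !mulmxA mulVmx // mul1mx mulmxK.
  by rewrite le_card ?unitmx_inv.
move=> uP uQ; have PQ_inj : injective (fun Y => P' *m Y *m Q').
  move=> Y1 Y2 /(congr1 (fun Z => invmx P' *m Z *m invmx Q')).
  by rewrite !mulmxA !mulmxK // !mulVmx // !mul1mx.
rewrite -(card_imset _ PQ_inj) subset_leq_card //.
apply/subsetP => _ /imsetP[Y + ->]; rewrite !inE => /andP[rkY rkXY].
by rewrite -mulmxBl -mulmxBr !mxrank_mul_unit ?rkY.
Qed.

Lemma card_rank_splits_pid X : #|rank_splits X| = #|rank_splits (pid_mx (\rank X))|.
Proof. by rewrite -{1}(mulmx_ebase X) card_rank_splits_mul ?col_ebase_unit ?row_ebase_unit. Qed.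

Lemma card_rank_splits_pid_nonincr d d' :
  (d' <= d <= p)%N -> (#|rank_splits (pid_mx d)| <= #|rank_splits (pid_mx d')|)%N.
Proof.
move=> /andP[le_d'd le_dp].
have := homo_leq_in (D := [pred i | i <= p]%N)
  (f := fun i => #|rank_splits (pid_mx i)|) (r := fun a b => b <= a)%N.
apply=> // [i j k le_ji le_kj|i j _ le_jp k /andP[_ /ltnW le_kj]|i _ lt_ip|].
- exact: leq_trans le_kj le_ji.
- exact: leq_trans le_kj le_jp.
- by rewrite -(row_set_pid_mx _ _ lt_ip) card_rank_splits_row0.
- exact: leq_trans le_d'd le_dp.
Qed.

Lemma card_rank_splits_nonincr X X' :
  (\rank X' <= \rank X)%N -> (#|rank_splits X| <= #|rank_splits X'|)%N.
Proof.
move=> le_rank; rewrite card_rank_splits_pid [leqRHS]card_rank_splits_pid.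
by apply: card_rank_splits_pid_nonincr; rewrite le_rank rank_leq_row.
Qed.
End RankSplits.

Import VectorInternalTheory.

Section RankMetricAsMatrixRank.
Variables (F : finFieldType) (L : fieldExtType F) (n : nat).
Notation FL := (finvect_type L).
Implicit Types (x y : 'rV[FL]_n).

Definition coord_mx x : 'M[F]_(n, dim L) := \matrix_i v2r (x 0 i : L).

Definition coord_mx_inv (Y : 'M[F]_(n, dim L)) : 'rV[FL]_n :=
  \row_i (r2v (row i Y) : L).

Lemma coord_mxK : cancel coord_mx coord_mx_inv.
Proof. by move=> x; apply/rowP => i; rewrite !mxE rowK v2rK. Qed.

Lemma coord_mx_invK : cancel coord_mx_inv coord_mx.
Proof. by move=> Y; apply/row_matrixP => i; rewrite rowK mxE r2vK. Qed.

Lemma coord_mxB x y : coord_mx (x - y) = coord_mx x - coord_mx y.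
Proof. by apply/matrixP => i l; rewrite !mxE raddfB !mxE. Qed.

Lemma coord_mxN x : coord_mx (- x) = - coord_mx x.
Proof. by apply/matrixP => i l; rewrite !mxE raddfN !mxE. Qed.

Lemma rk_coord_mx x : rk x = \rank (coord_mx x).
Proof.
rewrite /rk /dimv /span unlock_with /span_expanded_def mx2vsK.
set X := [seq x ord0 i | i <- enum 'I_n].
apply/eqmx_rank/andP; split; apply/row_subP => i.
  rewrite rowK (tnth_nth 0) /=.
  have /mapP[j _ ->] : X`_i \in X by rewrite mem_nth.
  by rewrite -(rowK (fun j => v2r (x 0 j : L)) j) row_sub.
have xiX : (x 0 i : L) \in X by apply/mapP; exists i; rewrite ?mem_enum.
have idx_x : (index (x ord0 i : L) X < size X)%N by rewrite index_mem.
have -> : row i (coord_mx x) = row (Ordinal idx_x) (b2mx (in_tuple X)).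
  by rewrite !rowK (tnth_nth 0) /= nth_index.
exact: row_sub.
Qed.

Lemma card_ballR_cap r s (c1 c2 : 'rV[FL]_n) :
  #|ballR r c1 :&: ballR s c2| = #|rank_splits r s (coord_mx (c1 - c2))|.
Proof.
pose g Y := c1 - coord_mx_inv Y.
have gK : cancel g (fun y => coord_mx (c1 - y)) by move=> Y; rewrite subKr coord_mx_invK.
have hK : cancel (fun y => coord_mx (c1 - y)) g by move=> y; rewrite /g coord_mxK subKr.
rewrite -(card_imset _ (can_inj hK)) (can2_imset_pre _ hK gK); apply: eq_card => Y.
rewrite !inE /dR !rk_coord_mx /g subKr (coord_mx_invK Y) -[c2 - _]opprB.
by rewrite coord_mxN mxrank_opp addrAC (coord_mxB (c1 - c2)) (coord_mx_invK Y).
Qed.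

End RankMetricAsMatrixRank.

Unset Implicit Arguments.
Local Close Scope ring_scope.

Theorem proposition2 (F : finFieldType) (L : fieldExtType F) (n r s : nat)
  (c1 c2 c1' c2' : 'rV[finvect_type L]_n) :
  (r <= n)%N -> (s <= n)%N ->
  (dR c1' c2' < dR c1 c2)%N ->
  (#|ballR r c1 :&: ballR s c2| <= #|ballR r c1' :&: ballR s c2'|)%N.
Proof.
(* The count is nonincreasing in the distance for all radii. *)
move=> _ _ lt_dR; rewrite !card_ballR_cap; apply: card_rank_splits_nonincr.
by rewrite -!rk_coord_mx ltnW.
Qed.
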